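(* In a $2^K$ factorial experiment, for each $*\in\{N,F,L\}$, $\tilde\tau_*=C_S\hat Y_*$ and $\tilde\Omega_*=C_S\hat\Psi_*C_S^T$.
   Context: A $2^K$ factorial experiment ($K$ a positive integer) has $K$ binary factors and $Q=2^K$ treatment levels $q=(z_1,\dots,z_K)\in\{-1,+1\}^K$, identified with $1,\dots,Q$ in lexicographical order ($-1$ before $+1$). There are $N$ units with observed outcomes $Y_i$ and covariates $x_i\in\mathbb R^J$ (with $\sum_ix_i=0$); $Z_{ik}\in\{-1,+1\}$ is the level of factor $k$ received by unit $i$, $t_i\in\{0,1\}^Q$ is the indicator vector of unit $i$'s treatment level, and each level is received by at least one unit. Let $\mathcal P_K$ be the set of nonempty subsets of $\{1,\dots,K\}$, $Z_{i,\mathcal K}=\prod_{k\in\mathcal K}Z_{ik}$, and $c_{\mathcal K}\in\mathbb R^Q$ the vector whose entry at level $(z_1,\dots,z_K)$ is $2^{-(K-1)}\prod_{k\in\mathcal K}z_k$. $C_S$ is the $(Q-1)\times Q$ matrix with rows $c_{\mathcal K}^T$, $\mathcal K\in\mathcal P_K$, in a fixed order. Treatment-based OLS regressions (no intercept): unadjusted $Y_i\sim t_i$, additive $Y_i\sim t_i+x_i$, fully interacted $Y_i\sim t_i+t_i\otimes x_i$; $\hat Y_*$ ($*=N,F,L$) is the coefficient vector of $t_i$ and $\hat\Psi_*$ its Eicker–Huber–White (EHW) covariance estimator (the corresponding block of $(X^TX)^{-1}X^T\mathrm{diag}(\hat\epsilon_i^2)X(X^TX)^{-1}$, $X$ the design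 matrix, $\hat\epsilon_i$ OLS residuals). Factor-saturated OLS regressions: $Y_i\sim1+\sum_{\mathcal K\in\mathcal P_K}Z_{i,\mathcal K}$ (N), $Y_i\sim1+\sum_{\mathcal K\in\mathcal P_K}Z_{i,\mathcal K}+x_i$ (F), $Y_i\sim1+\sum_{\mathcal K\in\mathcal P_K}Z_{i,\mathcal K}+x_i+\sum_{\mathcal K\in\mathcal P_K}Z_{i,\mathcal K}x_i$ (L). $\tilde\tau_{*,\mathcal K}$ is 2 times the OLS coefficient of $Z_{i,\mathcal K}$ in regression $*$, $\tilde\tau_*=(\tilde\tau_{*,\mathcal K})_{\mathcal K\in\mathcal P_K}$ in the same order as the rows of $C_S$, and $\tilde\Omega_*$ is the EHW covariance estimator of $\tilde\tau_*$ from the same fit (4 times the EHW covariance of these coefficients). *)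

From HB Require Import structures.
From mathcomp Require Import all_boot all_order all_algebra.
Set Implicit Arguments. Unset Strict Implicit. Unset Printing Implicit Defensive.
Import Order.TTheory GRing.Theory Num.Theory.
Local Open Scope ring_scope.

(* Treatment levels are 'I_(2^K), in lexicographic order of (z_1,...,z_K)
   with -1 before +1: level q has z_k = +1 iff the bit of q of weight
   2^(K-1-k) is set (k = 0 is the first factor, the most significant bit). *)
Definition lev_bit (K : nat) (q : 'I_(2 ^ K)) (k : 'I_K) : bool :=
  odd (q %/ 2 ^ (K.-1 - k))%N.

Definition sgnb (R : ringType) (b : bool) : R := if b then 1 else -1.

Definition Zfac (R : ringType) (N K : nat) (T : 'I_N -> 'I_(2 ^ K))
  (i : 'I_N) (k : 'I_K) : R := sgnb R (lev_bit (T i) k).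

Definition treat_mx (R : ringType) (N Q : nat) (T : 'I_N -> 'I_Q) : 'M[R]_(N, Q) :=
  \matrix_(i, q) (T i == q)%:R.

(* rows a_i (x) x_i (Kronecker product of the i-th rows) *)
Definition kron_rows (R : ringType) (N m J : nat) (A : 'M[R]_(N, m))
  (X : 'M[R]_(N, J)) : 'M[R]_(N, m * J) :=
  \matrix_(i < N) mxvec ((row i A)^T *m row i X).

(* columns Z_{i,Kset} for the nonempty subsets, in the order given by [sub] *)
Definition contrast_mx (R : ringType) (N K : nat) (T : 'I_N -> 'I_(2 ^ K))
  (sub : 'I_((2 ^ K).-1) -> {set 'I_K}) : 'M[R]_(N, (2 ^ K).-1) :=
  \matrix_(i, j) \prod_(k in sub j) Zfac R T i k.

Definition CS (R : fieldType) (K : nat) (sub : 'I_((2 ^ K).-1) -> {set 'I_K})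
  : 'M[R]_((2 ^ K).-1, 2 ^ K) :=
  \matrix_(j, q) ((2 ^+ K.-1)^-1 * \prod_(k in sub j) sgnb R (lev_bit q k)).

Definition ones_col (R : ringType) (N : nat) : 'M[R]_(N, 1) := const_mx 1.

Definition ols (R : fieldType) (N p : nat) (X : 'M[R]_(N, p)) (Y : 'cV[R]_N)
  : 'cV[R]_p := invmx (X^T *m X) *m (X^T *m Y).

Definition ols_resid (R : fieldType) (N p : nat) (X : 'M[R]_(N, p)) (Y : 'cV[R]_N)
  : 'cV[R]_N := Y - X *m ols X Y.

Definition ehw (R : fieldType) (N p : nat) (X : 'M[R]_(N, p)) (Y : 'cV[R]_N)
  : 'M[R]_p :=
  let G := invmx (X^T *m X) in
  let e := ols_resid X Y in
  G *m (X^T *m diag_mx (\row_i (e i 0 ^+ 2)) *m X) *m G.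

Definition designN_t (R : ringType) N K (T : 'I_N -> 'I_(2 ^ K)) : 'M[R]_(N, 2 ^ K) :=
  treat_mx R T.
Definition designF_t (R : ringType) N K J (T : 'I_N -> 'I_(2 ^ K)) (X : 'M[R]_(N, J))
  : 'M[R]_(N, 2 ^ K + J) := row_mx (treat_mx R T) X.
Definition designL_t (R : ringType) N K J (T : 'I_N -> 'I_(2 ^ K)) (X : 'M[R]_(N, J))
  : 'M[R]_(N, 2 ^ K + 2 ^ K * J) := row_mx (treat_mx R T) (kron_rows (treat_mx R T) X).

Definition designN_f (R : ringType) N K (T : 'I_N -> 'I_(2 ^ K))
  (sub : 'I_((2 ^ K).-1) -> {set 'I_K}) : 'M[R]_(N, 1 + (2 ^ K).-1) :=
  row_mx (ones_col R N) (contrast_mx R T sub).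
Definition designF_f (R : ringType) N K J (T : 'I_N -> 'I_(2 ^ K))
  (sub : 'I_((2 ^ K).-1) -> {set 'I_K}) (X : 'M[R]_(N, J))
  : 'M[R]_(N, 1 + (2 ^ K).-1 + J) := row_mx (designN_f R T sub) X.
Definition designL_f (R : ringType) N K J (T : 'I_N -> 'I_(2 ^ K))
  (sub : 'I_((2 ^ K).-1) -> {set 'I_K}) (X : 'M[R]_(N, J))
  : 'M[R]_(N, 1 + (2 ^ K).-1 + J + (2 ^ K).-1 * J) :=
  row_mx (designF_f T sub X) (kron_rows (contrast_mx R T sub) X).

Definition YhatN (R : fieldType) N K (T : 'I_N -> 'I_(2 ^ K)) (Y : 'cV[R]_N)
  : 'cV[R]_(2 ^ K) := ols (designN_t R T) Y.
Definition PsiN (R : fieldType) N K (T : 'I_N -> 'I_(2 ^ K)) (Y : 'cV[R]_N)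
  : 'M[R]_(2 ^ K) := ehw (designN_t R T) Y.
Definition YhatF (R : fieldType) N K J (T : 'I_N -> 'I_(2 ^ K)) (X : 'M[R]_(N, J))
  (Y : 'cV[R]_N) : 'cV[R]_(2 ^ K) := usubmx (ols (designF_t T X) Y).
Definition PsiF (R : fieldType) N K J (T : 'I_N -> 'I_(2 ^ K)) (X : 'M[R]_(N, J))
  (Y : 'cV[R]_N) : 'M[R]_(2 ^ K) := ulsubmx (ehw (designF_t T X) Y).
Definition YhatL (R : fieldType) N K J (T : 'I_N -> 'I_(2 ^ K)) (X : 'M[R]_(N, J))
  (Y : 'cV[R]_N) : 'cV[R]_(2 ^ K) := usubmx (ols (designL_t T X) Y).
Definition PsiL (R : fieldType) N K J (T : 'I_N -> 'I_(2 ^ K)) (X : 'M[R]_(N, J))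
  (Y : 'cV[R]_N) : 'M[R]_(2 ^ K) := ulsubmx (ehw (designL_t T X) Y).

Definition tauN (R : fieldType) N K (T : 'I_N -> 'I_(2 ^ K))
  (sub : 'I_((2 ^ K).-1) -> {set 'I_K}) (Y : 'cV[R]_N) : 'cV[R]_((2 ^ K).-1) :=
  2 *: dsubmx (ols (designN_f R T sub) Y).
Definition OmegaN (R : fieldType) N K (T : 'I_N -> 'I_(2 ^ K))
  (sub : 'I_((2 ^ K).-1) -> {set 'I_K}) (Y : 'cV[R]_N) : 'M[R]_((2 ^ K).-1) :=
  4 *: drsubmx (ehw (designN_f R T sub) Y).
Definition tauF (R : fieldType) N K J (T : 'I_N -> 'I_(2 ^ K))
  (sub : 'I_((2 ^ K).-1) -> {set 'I_K}) (X : 'M[R]_(N, J)) (Y : 'cV[R]_N)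
  : 'cV[R]_((2 ^ K).-1) := 2 *: dsubmx (usubmx (ols (designF_f T sub X) Y)).
Definition OmegaF (R : fieldType) N K J (T : 'I_N -> 'I_(2 ^ K))
  (sub : 'I_((2 ^ K).-1) -> {set 'I_K}) (X : 'M[R]_(N, J)) (Y : 'cV[R]_N)
  : 'M[R]_((2 ^ K).-1) := 4 *: drsubmx (ulsubmx (ehw (designF_f T sub X) Y)).
Definition tauL (R : fieldType) N K J (T : 'I_N -> 'I_(2 ^ K))
  (sub : 'I_((2 ^ K).-1) -> {set 'I_K}) (X : 'M[R]_(N, J)) (Y : 'cV[R]_N)
  : 'cV[R]_((2 ^ K).-1) :=
  2 *: dsubmx (usubmx (usubmx (ols (designL_f T sub X) Y))).
Definition OmegaL (R : fieldType) N K J (T : 'I_N -> 'I_(2 ^ K))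
  (sub : 'I_((2 ^ K).-1) -> {set 'I_K}) (X : 'M[R]_(N, J)) (Y : 'cV[R]_N)
  : 'M[R]_((2 ^ K).-1) :=
  4 *: drsubmx (ulsubmx (ulsubmx (ehw (designL_f T sub X) Y))).

From HB Require Import structures.
From mathcomp Require Import all_boot all_order all_algebra.
Set Implicit Arguments. Unset Strict Implicit. Unset Printing Implicit Defensive.
Import Order.TTheory GRing.Theory Num.Theory.
Local Open Scope ring_scope.

(* Each factor-saturated design is the treatment-based design multiplied on
   the right by an invertible matrix B: the columns 1 and Z_{i,Kset} are t_i^T H
   for the Hadamard-type matrix H = [1 | C], and the interaction columns are
   linear images of t_i (x) x_i.  Under X -> X B the residuals do not change,
   the OLS coefficients become B^-1 b and the EHW covariance B^-1 V B^-T.  The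
   Walsh characters being orthogonal, H H^T = 2^K I, so the rows of B^-1
   belonging to the factorial effects are those of 2^-K C^T = C_S / 2. *)

Lemma mulmx1C_eqdim (R : comUnitRingType) p p' (B : 'M[R]_(p, p')) (B' : 'M[R]_(p', p)) :
  p = p' -> B *m B' = 1%:M -> B' *m B = 1%:M.
Proof. by move=> e; case: p' / e in B B' *; apply: mulmx1C. Qed.

Section Reparametrization.
Variable R : fieldType.

Lemma invmx_eq n (A C : 'M[R]_n) : A *m C = 1%:M -> invmx A = C.
Proof.
move=> AC; have [A_unit _] := mulmx1_unit AC.
by rewrite -[invmx A]mulmx1 -AC mulmxA mulVmx // mul1mx.
Qed.

Variables (N p p' : nat) (X : 'M[R]_(N, p)).
Variables (B : 'M[R]_(p, p')) (B' : 'M[R]_(p', p)).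
Hypothesis XX_unit : X^T *m X \in unitmx.
Hypotheses (BB' : B *m B' = 1%:M) (B'B : B' *m B = 1%:M).

Let trBB' : B'^T *m B^T = 1%:M.
Proof. by rewrite -trmx_mul BB' trmx1. Qed.

Lemma gram_mulmxr_inv :
  invmx ((X *m B)^T *m (X *m B)) = B' *m invmx (X^T *m X) *m B'^T.
Proof.
apply: invmx_eq; rewrite trmx_mul -!mulmxA [B *m (B' *m _)]mulmxA BB' mul1mx.
rewrite [X^T *m (X *m _)]mulmxA [(X^T *m X) *m (_ *m _)]mulmxA mulmxV //.
by rewrite mul1mx -trmx_mul B'B trmx1.
Qed.

Lemma ols_mulmxr (Y : 'cV[R]_N) : ols (X *m B) Y = B' *m ols X Y.
Proof.
rewrite /ols gram_mulmxr_inv trmx_mul -!mulmxA.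
by rewrite [B'^T *m (B^T *m _)]mulmxA trBB' mul1mx !mulmxA.
Qed.

Lemma ols_resid_mulmxr (Y : 'cV[R]_N) : ols_resid (X *m B) Y = ols_resid X Y.
Proof.
by rewrite /ols_resid ols_mulmxr -!mulmxA [B *m (B' *m _)]mulmxA BB' mul1mx.
Qed.

Lemma ehw_mulmxr (Y : 'cV[R]_N) : ehw (X *m B) Y = B' *m ehw X Y *m B'^T.
Proof.
rewrite /ehw /= ols_resid_mulmxr gram_mulmxr_inv trmx_mul -!mulmxA.
rewrite [B'^T *m (B^T *m _)]mulmxA trBB' mul1mx.
by rewrite [B *m (B' *m _)]mulmxA BB' mul1mx !mulmxA.
Qed.

End Reparametrization.

Section Blocks.
Variable R : pzRingType.

Lemma mul_row0_mx m n1 n2 p (A : 'M[R]_(m, n1)) (v : 'M[R]_(n1 + n2, p)) :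
  row_mx A (0 : 'M_(m, n2)) *m v = A *m usubmx v.
Proof. by rewrite -{1}[v]vsubmxK mul_row_col mul0mx addr0. Qed.

Lemma ulsubmx_conj m1 m2 n (M : 'M[R]_(m1 + m2, n)) (P : 'M[R]_n) :
  ulsubmx (M *m P *m M^T) = usubmx M *m P *m (usubmx M)^T.
Proof. by rewrite -{1 2}[M]vsubmxK tr_col_mx mul_col_mx mul_col_row block_mxKul. Qed.

Lemma drsubmx_conj m1 m2 n (M : 'M[R]_(m1 + m2, n)) (P : 'M[R]_n) :
  drsubmx (M *m P *m M^T) = dsubmx M *m P *m (dsubmx M)^T.
Proof. by rewrite -{1 2}[M]vsubmxK tr_col_mx mul_col_mx mul_col_row block_mxKdr. Qed.

Lemma conj_row0_mx m n1 n2 (A : 'M[R]_(m, n1)) (P : 'M[R]_(n1 + n2)) :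
  row_mx A (0 : 'M_(m, n2)) *m P *m (row_mx A 0)^T = A *m ulsubmx P *m A^T.
Proof.
rewrite mul_row0_mx -{1}[P]submxK tr_row_mx trmx0 /block_mx col_mxKu.
by rewrite -mulmxA mul_row_col mulmx0 addr0 mulmxA.
Qed.

End Blocks.

Section KronRows.
Variables (R : comNzRingType) (N m J : nat) (X : 'M[R]_(N, J)).

Lemma kron_rows_mulmxr m' (A : 'M[R]_(N, m)) (B : 'M[R]_(m, m')) :
  kron_rows (A *m B) X = kron_rows A X *m lin_mx (mulmx B^T).
Proof.
apply/row_matrixP => i; rewrite row_mul /kron_rows !rowK mul_vec_lin /=.
by rewrite row_mul trmx_mul mulmxA.
Qed.

Lemma kron_rows_contract (A : 'M[R]_(N, m)) (v : 'rV[R]_m) :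
  A *m v^T = const_mx 1 -> kron_rows A X *m lin1_mx (mulmx v \o vec_mx) = X.
Proof.
move=> Av1; apply/row_matrixP => i.
rewrite row_mul /kron_rows rowK mul_rV_lin1 /= mxvecK mulmxA.
suff -> : v *m (row i A)^T = 1%:M by rewrite mul1mx.
have := congr1 (row i) Av1; rewrite row_mul => /(congr1 trmx).
rewrite trmx_mul trmxK => ->.
by apply/matrixP => a b; rewrite !mxE !ord1.
Qed.

End KronRows.

Section TreatmentMatrix.
Variables (N Q : nat) (T : 'I_N -> 'I_Q).

Lemma treat_mxM (R : nzRingType) p (M : 'M[R]_(Q, p)) :
  treat_mx R T *m M = \matrix_(i, j) M (T i) j.
Proof.
apply/matrixP=> i j; rewrite !mxE (bigD1 (T i)) //= mxE eqxx mul1r big1 ?addr0 //.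
by move=> q /negbTE Tiq; rewrite mxE eq_sym Tiq mul0r.
Qed.

Lemma treat_mx_const1 (R : nzRingType) :
  treat_mx R T *m const_mx 1 = const_mx 1 :> 'cV[R]_N.
Proof. by rewrite treat_mxM; apply/matrixP => i j; rewrite !mxE. Qed.

Lemma treat_gram_unit (R : numFieldType) :
  (forall q, exists i, T i = q) -> (treat_mx R T)^T *m treat_mx R T \in unitmx.
Proof.
move=> T_onto.
have -> : (treat_mx R T)^T *m treat_mx R T =
    diag_mx (\row_q (\sum_i (T i == q))%:R).
  apply/matrixP => q q'; rewrite !mxE natr_sum mulrb.
  case: eqVneq => [<- | qq']; [apply: eq_bigr | apply: big1] => i _.
    by rewrite !mxE -natrM mulnb andbb.
  by rewrite !mxE; case: (T i =P q) => [->|]; rewrite ?(negbTE qq') ?mulr0 ?mul0r.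
rewrite unitmxE det_diag unitfE; apply/prodf_neq0 => q _; rewrite mxE pnatr_eq0 -lt0n.
by have [i <-] := T_onto q; rewrite (bigD1 i) //= eqxx.
Qed.

End TreatmentMatrix.

Section SaturatedReparametrization.
Variables (R : comUnitRingType) (Q n J : nat).
Variables (P : 'M[R]_(Q, 1 + n)) (P' : 'M[R]_(1 + n, Q)).

Definition reparamF : 'M[R]_(Q + J, 1 + n + J) := block_mx P 0 0 1%:M.

Definition reparamF_inv : 'M[R]_(1 + n + J, Q + J) := block_mx P' 0 0 1%:M.

(* The interaction columns x_i and Z_{i,Kset} x_i are the images of t_i (x) x_i
   under M |-> (lsubmx P)^T M and M |-> (rsubmx P)^T M. *)
Definition reparamL : 'M[R]_(Q + Q * J, 1 + n + J + n * J) :=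
  block_mx (row_mx P 0) 0
    (row_mx 0 (lin1_mx (mulmx (lsubmx P)^T \o vec_mx))) (lin_mx (mulmx (rsubmx P)^T)).

Definition reparamL_inv : 'M[R]_(1 + n + J + n * J, Q + Q * J) :=
  block_mx (col_mx P' 0) (col_mx 0 (lin1_mx (mxvec \o mulmx (usubmx P')^T))) 0
    (lin_mx (mulmx (dsubmx P')^T)).

Lemma usubmx_reparamF_inv : usubmx reparamF_inv = row_mx P' 0.
Proof. by rewrite /reparamF_inv /block_mx col_mxKu. Qed.

Lemma usubmx_reparamL_inv : usubmx (usubmx reparamL_inv) = row_mx P' 0.
Proof. by rewrite /reparamL_inv /block_mx col_mxKu -block_mxEh /block_mx col_mxKu. Qed.

Hypothesis PP' : P *m P' = 1%:M.

Lemma reparamF_mulV : reparamF *m reparamF_inv = 1%:M.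
Proof.
rewrite mulmx_block !(mulmx0, mul0mx, addr0, add0r) mulmx1 PP'.
by rewrite -scalar_mx_block.
Qed.

Lemma reparamF_Vmul : Q = (1 + n)%N -> reparamF_inv *m reparamF = 1%:M.
Proof. by move=> eqQ; apply: mulmx1C_eqdim reparamF_mulV; rewrite eqQ. Qed.

Lemma reparamL_mulV : reparamL *m reparamL_inv = 1%:M.
Proof.
rewrite mulmx_block !mul_row_col !(mulmx0, mul0mx, addr0, add0r) PP'.
suff -> : lin1_mx (mulmx (lsubmx P)^T \o vec_mx) *m lin1_mx (mxvec \o mulmx (usubmx P')^T)
    + lin_mx (mulmx (rsubmx P)^T) *m lin_mx (mulmx (dsubmx P')^T) = 1%:M :> 'M_(Q * J).
  by rewrite -!scalar_mx_block.
apply/row_matrixP => r; rewrite !rowE -[delta_mx 0 r]vec_mxK.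
rewrite mulmxDr !mulmxA mul_rV_lin1 /= [mxvec _ *m lin1_mx _]mul_rV_lin1 /= mxvecK.
rewrite [mxvec _ *m lin_mx _]mul_vec_lin mul_vec_lin /= -linearD /= mulmx1.
rewrite !mulmxA -mulmxDl -!trmx_mul -linearD /= -mul_row_col hsubmxK vsubmxK.
by rewrite PP' trmx1 mul1mx.
Qed.

Lemma reparamL_Vmul : Q = (1 + n)%N -> reparamL_inv *m reparamL = 1%:M.
Proof.
by move=> eqQ; apply: mulmx1C_eqdim reparamL_mulV; rewrite eqQ mulnDl mul1n addnA.
Qed.

End SaturatedReparametrization.

Lemma eq_from_bits n q q' : (q < 2 ^ n)%N -> (q' < 2 ^ n)%N ->
  (forall m, (m < n)%N -> odd (q %/ 2 ^ m) = odd (q' %/ 2 ^ m)) -> q = q'.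
Proof.
elim: n q q' => [|n IHn] q q'; first by rewrite expn0 !ltnS !leqn0 => /eqP-> /eqP->.
move=> q_lt q'_lt eq_bits.
have eq_odd := eq_bits 0%N (ltn0Sn n); rewrite expn0 !divn1 in eq_odd.
have eq_half : (q %/ 2 = q' %/ 2)%N.
  apply: IHn; rewrite ?ltn_divLR // -?expnSr // => m m_lt.
  by rewrite -!divnMA -expnS; apply: eq_bits.
by rewrite (divn_eq q 2) (divn_eq q' 2) eq_half !modn2 eq_odd.
Qed.

Lemma lev_bit_inj K (q q' : 'I_(2 ^ K)) :
  (forall k, lev_bit q k = lev_bit q' k) -> q = q'.
Proof.
move=> eq_bits; apply/val_inj/(eq_from_bits (ltn_ord q) (ltn_ord q')) => m m_lt.
have m_le : (m <= K.-1)%N by rewrite -ltnS prednK // (leq_ltn_trans _ m_lt).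
have k_lt : (K.-1 - m < K)%N.
  by rewrite (leq_ltn_trans (leq_subr _ _)) // ltn_predL (leq_ltn_trans _ m_lt).
by have := eq_bits (Ordinal k_lt); rewrite /lev_bit /= subKn.
Qed.

Lemma sgnbM (R : nzRingType) b b' : sgnb R b * sgnb R b' = sgnb R (b == b').
Proof. by case: b; case: b'; rewrite /= ?mulr1 ?mulrN1 ?opprK. Qed.

Lemma sum_subsets_prod (R : comPzSemiRingType) (I : finType) (a : I -> R) :
  \sum_(S : {set I}) \prod_(k in S) a k = \prod_k (a k + 1).
Proof. by rewrite bigA_distr; apply: eq_bigr => S _; rewrite big_mkcond. Qed.

Section Hadamard.
Variables (R : numFieldType) (K : nat) (sub : 'I_((2 ^ K).-1) -> {set 'I_K}).
Hypotheses (sub_inj : injective sub) (sub_neq0 : forall j, sub j != set0).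

Lemma sum_nonempty_subsets (V : nmodType) (f : {set 'I_K} -> V) :
  \sum_j f (sub j) = \sum_(S | S != set0) f S.
Proof.
have im_sub : sub @: setT = [set S : {set 'I_K} | S != set0].
  apply/eqP; rewrite eqEcard; apply/andP; split.
    by apply/subsetP=> S /imsetP [j _ ->]; rewrite inE sub_neq0.
  rewrite card_imset // cardsT card_ord cardsE cardC1.
  by rewrite -cardsT -powersetT card_powerset cardsT card_ord.
rewrite (eq_bigl [in setT]) => [|j]; last by rewrite inE.
rewrite -(big_imset _ (in2W sub_inj)) /= im_sub.
by apply: eq_bigl => S; rewrite inE.
Qed.

Definition contrasts : 'M[R]_(2 ^ K, (2 ^ K).-1) :=
  \matrix_(q, j) \prod_(k in sub j) sgnb R (lev_bit q k).

Definition hadamard : 'M[R]_(2 ^ K, 1 + (2 ^ K).-1) := row_mx (const_mx 1) contrasts.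

Definition hadamard_inv : 'M[R]_(1 + (2 ^ K).-1, 2 ^ K) := (2 ^+ K)^-1 *: hadamard^T.

Lemma hadamard_mul_tr : hadamard *m hadamard^T = (2 ^+ K)%:M.
Proof.
apply/matrixP => q q'; rewrite tr_row_mx mul_row_col !mxE big_ord1 !mxE mul1r.
under eq_bigr => j _ do rewrite !mxE -big_split /=.
set a := fun k => sgnb R (lev_bit q k) * sgnb R (lev_bit q' k).
have sum_all :
    \sum_(S : {set 'I_K}) \prod_(k in S) a k = 1 + \sum_j \prod_(k in sub j) a k.
  rewrite (sum_nonempty_subsets (fun S => \prod_(k in S) a k)).
  by rewrite (bigD1 set0) //= big_set0.
rewrite -sum_all sum_subsets_prod /a.
under eq_bigr => k _ do rewrite sgnbM.
case: eqVneq => [<- | qq'].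
  by under eq_bigr => k _ do rewrite eqxx /=; rewrite prodr_const card_ord.
have [k bit_k] : exists k, lev_bit q k != lev_bit q' k.
  apply/existsP; apply: contraR qq'; rewrite negb_exists => /forallP same.
  by apply/eqP/lev_bit_inj => k; apply/eqP; move: (same k); rewrite negbK.
by rewrite (bigD1 k) //= (negbTE bit_k) addNr mul0r.
Qed.

Lemma hadamard_mulV : hadamard *m hadamard_inv = 1%:M.
Proof.
rewrite /hadamard_inv -scalemxAr hadamard_mul_tr -scalemx1 scalerA mulVf ?scale1r //.
by rewrite expf_neq0 // pnatr_eq0.
Qed.

Lemma hadamard_Vmul : hadamard_inv *m hadamard = 1%:M.
Proof. by apply: mulmx1C_eqdim hadamard_mulV; rewrite add1n prednK // expn_gt0. Qed.

Hypothesis K_gt0 : (0 < K)%N.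

Lemma CS_hadamard_inv : CS R sub = 2 *: dsubmx hadamard_inv.
Proof.
rewrite /hadamard_inv /hadamard tr_row_mx linearZ /= col_mxKd scalerA.
apply/matrixP => j q; rewrite !mxE; congr (_ * _).
rewrite -[in RHS](prednK K_gt0) exprS invfM mulrA mulfV ?mul1r //.
by rewrite pnatr_eq0.
Qed.

Lemma CS_mul (v : 'cV[R]_(2 ^ K)) : 2 *: dsubmx (hadamard_inv *m v) = CS R sub *m v.
Proof. by rewrite CS_hadamard_inv -mul_dsub_mx scalemxAl. Qed.

Lemma CS_conj (P : 'M[R]_(2 ^ K)) :
  4 *: drsubmx (hadamard_inv *m P *m hadamard_inv^T) = CS R sub *m P *m (CS R sub)^T.
Proof.
rewrite drsubmx_conj CS_hadamard_inv [(2 *: _)^T]linearZ /=.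
by rewrite -scalemxAl -scalemxAr -scalemxAl scalerA -natrM.
Qed.

Lemma CS_top_block p r (B' : 'M[R]_(1 + (2 ^ K).-1 + p, 2 ^ K + r))
    (b : 'cV[R]_(2 ^ K + r)) (E : 'M[R]_(2 ^ K + r)) :
  usubmx B' = row_mx hadamard_inv 0 ->
  2 *: dsubmx (usubmx (B' *m b)) = CS R sub *m usubmx b /\
  4 *: drsubmx (ulsubmx (B' *m E *m B'^T)) = CS R sub *m ulsubmx E *m (CS R sub)^T.
Proof.
move=> top_B'; rewrite -mul_usub_mx ulsubmx_conj top_B' mul_row0_mx conj_row0_mx.
by split; [apply: CS_mul | apply: CS_conj].
Qed.

End Hadamard.

Section FactorialDesigns.
Variables (R : numFieldType) (K N J : nat) (T : 'I_N -> 'I_(2 ^ K)).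
Variables (sub : 'I_((2 ^ K).-1) -> {set 'I_K}) (X : 'M[R]_(N, J)).

Lemma contrast_mx_treat : contrast_mx R T sub = treat_mx R T *m contrasts R sub.
Proof. by rewrite treat_mxM; apply/matrixP => i j; rewrite !mxE. Qed.

Lemma designN_f_reparam : designN_f R T sub = designN_t R T *m hadamard R sub.
Proof.
by rewrite /designN_f mul_mx_row -contrast_mx_treat treat_mx_const1.
Qed.

Lemma designF_f_reparam :
  designF_f T sub X = designF_t T X *m reparamF J (hadamard R sub).
Proof.
rewrite /designF_f /designF_t mul_row_block !(mulmx0, mul0mx, addr0, add0r) mulmx1.
by rewrite designN_f_reparam.
Qed.

Lemma designL_f_reparam :
  designL_f T sub X = designL_t T X *m reparamL J (hadamard R sub).
Proof.
rewrite /designL_f /designL_t mul_row_block !mul_mx_row !(mulmx0, addr0, add0r).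
rewrite add_row_mx addr0 add0r kron_rows_contract; last first.
  by rewrite trmxK row_mxKl treat_mx_const1.
by rewrite row_mxKr -kron_rows_mulmxr -contrast_mx_treat treat_mx_const1.
Qed.

End FactorialDesigns.

Section Estimates.
Variables (R : numFieldType) (K N J : nat) (T : 'I_N -> 'I_(2 ^ K)).
Variables (X : 'M[R]_(N, J)) (Y : 'cV[R]_N) (sub : 'I_((2 ^ K).-1) -> {set 'I_K}).
Hypotheses (K_gt0 : (0 < K)%N) (sub_inj : injective sub).
Hypotheses (sub_neq0 : forall j, sub j != set0) (T_onto : forall q, exists i, T i = q).

Let HV := hadamard_mulV R sub_inj sub_neq0.
Let VH := hadamard_Vmul R sub_inj sub_neq0.
Let square : (2 ^ K = 1 + (2 ^ K).-1)%N.
Proof. by rewrite add1n prednK // expn_gt0. Qed.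

Lemma tauN_OmegaN :
  tauN T sub Y = CS R sub *m YhatN T Y /\
  OmegaN T sub Y = CS R sub *m PsiN T Y *m (CS R sub)^T.
Proof.
have gram_unit := treat_gram_unit R T_onto.
rewrite /tauN /OmegaN designN_f_reparam (ols_mulmxr gram_unit HV VH).
rewrite (ehw_mulmxr gram_unit HV VH).
by split; [apply: CS_mul | apply: CS_conj].
Qed.

Lemma tauF_OmegaF : (designF_t T X)^T *m designF_t T X \in unitmx ->
  tauF T sub X Y = CS R sub *m YhatF T X Y /\
  OmegaF T sub X Y = CS R sub *m PsiF T X Y *m (CS R sub)^T.
Proof.
move=> gram_unit; have FV := reparamF_mulV J HV; have VF := reparamF_Vmul J HV square.
rewrite /tauF /OmegaF designF_f_reparam (ols_mulmxr gram_unit FV VF).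
rewrite (ehw_mulmxr gram_unit FV VF).
by apply: CS_top_block => //; apply: usubmx_reparamF_inv.
Qed.

Lemma tauL_OmegaL : (designL_t T X)^T *m designL_t T X \in unitmx ->
  tauL T sub X Y = CS R sub *m YhatL T X Y /\
  OmegaL T sub X Y = CS R sub *m PsiL T X Y *m (CS R sub)^T.
Proof.
move=> gram_unit; have LV := reparamL_mulV J HV; have VL := reparamL_Vmul J HV square.
rewrite /tauL /OmegaL designL_f_reparam (ols_mulmxr gram_unit LV VL).
rewrite (ehw_mulmxr gram_unit LV VL) -mul_usub_mx ulsubmx_conj.
by apply: CS_top_block => //; apply: usubmx_reparamL_inv.
Qed.

End Estimates.

Theorem proposition1 (R : realFieldType) (K N J : nat)
  (T : 'I_N -> 'I_(2 ^ K)) (X : 'M[R]_(N, J)) (Y : 'cV[R]_N)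
  (sub : 'I_((2 ^ K).-1) -> {set 'I_K}) :
  (0 < K)%N ->
  injective sub -> (forall j, sub j != set0) ->
  (forall q, exists i, T i = q) ->
  (forall j, \sum_i X i j = 0) ->
  (designF_t T X)^T *m designF_t T X \in unitmx ->
  (designL_t T X)^T *m designL_t T X \in unitmx ->
  [/\ tauN T sub Y = CS R sub *m YhatN T Y /\
        OmegaN T sub Y = CS R sub *m PsiN T Y *m (CS R sub)^T,
      tauF T sub X Y = CS R sub *m YhatF T X Y /\
        OmegaF T sub X Y = CS R sub *m PsiF T X Y *m (CS R sub)^T
    & tauL T sub X Y = CS R sub *m YhatL T X Y /\
        OmegaL T sub X Y = CS R sub *m PsiL T X Y *m (CS R sub)^T].
Proof.
move=> K_gt0 sub_inj sub_neq0 T_onto _ F_unit L_unit.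
by split; [apply: tauN_OmegaN | apply: tauF_OmegaF | apply: tauL_OmegaL].
Qed.
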